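(* Assume $\sum_{i=1}^M b_i<1$ and let $\mathbf r^\star(\epsilon)$ be the energy-scarce solution. Then $\lim_{\epsilon\to0^+}|\bar\Delta(\mathbf r^\star(\epsilon))-\bar\Delta_{\mathrm{opt}}(\epsilon)|=0$, and $$\lim_{\epsilon\to0^+}\bar\Delta_{\mathrm{opt}}(\epsilon)=\sum_{i=1}^M\Big[\frac{w_i}{b_i}+w_i\Big].$$
   Context: Fix an integer $M\ge1$, weights $w_1,\dots,w_M>0$, constants $b_1,\dots,b_M>0$, and $\epsilon>0$. For $\mathbf r\in(0,\infty)^M$ write $S(\mathbf r)=\sum_{i=1}^M r_i$ and define $$\bar\Delta(\mathbf r)=\sum_{l=1}^M \frac{w_l e^{-r_l\epsilon}}{r_l}\, e^{\epsilon S(\mathbf r)}\big(1+S(\mathbf r)\big)+\sum_{l=1}^M w_l,\qquad \sigma_l(\mathbf r)=\frac{(1-e^{-r_l\epsilon})S(\mathbf r)+r_le^{-r_l\epsilon}}{S(\mathbf r)+1}.$$ Problem 1: minimize $\bar\Delta(\mathbf r)$ over $\mathbf r\in(0,\infty)^M$ subject to $\sigma_l(\mathbf r)\le b_l$ for all $l$; its optimal (infimum) value is $\bar\Delta_{\mathrm{opt}}(\epsilon)$. Energy-scarce solution (when $B:=\sum_i b_i<1$): for each $l$ let $$c_l=\frac{2b_l(1-B)^2}{b_l(1-B)^2+\sqrt{b_l^2(1-B)^4+4b_l^2(1-B)^2(B-b_l)\epsilon}},$$ let $x^\star=\frac{\min_l c_l}{1-B}$, $\beta^\star=\sum_{i=1}^M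 \frac{1}{\sqrt{w_i}}$, and set $r^\star_l=\min\{b_l,\beta^\star\sqrt{w_l}\}\,x^\star$. *)

From Stdlib Require Import Reals Lra ClassicalEpsilon.
Open Scope R_scope.

(* Finite sum over indices 0 .. n-1 (vectors are functions nat -> R, indices 0..M-1). *)
Fixpoint fsum (n : nat) (f : nat -> R) : R :=
  match n with
  | O => 0
  | S k => fsum k f + f k
  end.

(* Minimum over indices 0 .. n-1 (for n >= 1; fmin 0 f := f 0 is a dummy). *)
Fixpoint fmin (n : nat) (f : nat -> R) : R :=
  match n with
  | O => f O
  | S O => f O
  | S k => Rmin (fmin k f) (f k)
  end.

Definition S_r (M : nat) (r : nat -> R) : R := fsum M r.

Definition Delta_bar (M : nat) (w : nat -> R) (eps : R) (r : nat -> R) : R :=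
  fsum M (fun l => w l * exp (- r l * eps) / r l * exp (eps * S_r M r) * (1 + S_r M r))
  + fsum M w.

Definition sigma (M : nat) (eps : R) (r : nat -> R) (l : nat) : R :=
  ((1 - exp (- r l * eps)) * S_r M r + r l * exp (- r l * eps)) / (S_r M r + 1).

Definition feasible (M : nat) (b : nat -> R) (eps : R) (r : nat -> R) : Prop :=
  (forall i, (i < M)%nat -> 0 < r i) /\
  (forall l, (l < M)%nat -> sigma M eps r l <= b l).

Definition is_glb (E : R -> Prop) (m : R) : Prop :=
  (forall x, E x -> m <= x) /\ (forall m', (forall x, E x -> m' <= x) -> m' <= m).

(* the infimum of a set (chosen via classical epsilon; it is the greatest
   lower bound whenever one exists) *)
Definition Rinf (E : R -> Prop) : R := epsilon (inhabits 0) (is_glb E).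

Definition Delta_opt (M : nat) (w b : nat -> R) (eps : R) : R :=
  Rinf (fun v => exists r, feasible M b eps r /\ v = Delta_bar M w eps r).

Definition Bsum (M : nat) (b : nat -> R) : R := fsum M b.

Definition c_coef (M : nat) (b : nat -> R) (eps : R) (l : nat) : R :=
  let B := Bsum M b in
  2 * b l * (1 - B) ^ 2 /
  (b l * (1 - B) ^ 2
   + sqrt (b l ^ 2 * (1 - B) ^ 4 + 4 * b l ^ 2 * (1 - B) ^ 2 * (B - b l) * eps)).

Definition x_star (M : nat) (b : nat -> R) (eps : R) : R :=
  fmin M (c_coef M b eps) / (1 - Bsum M b).

Definition beta_star (M : nat) (w : nat -> R) : R :=
  fsum M (fun i => 1 / sqrt (w i)).

Definition r_star (M : nat) (w b : nat -> R) (eps : R) (l : nat) : R :=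
  Rmin (b l) (beta_star M w * sqrt (w l)) * x_star M b eps.

(* For a feasible r, sigma_l(r) >= r_l / (S + 1) because r_l <= S, so r_l <= b_l (S + 1), and
   since exp(eps (S - r_l)) >= 1 every summand of Delta_bar is at least w_l / b_l: Delta_bar >= L
   with L = sum (w_i / b_i + w_i).  Conversely, on proportional vectors r = b x with
   x in [x_low, 1 / (1 - B)], where x_low = (1 - B) / ((1 - B)^2 + eps B), Delta_bar exceeds L
   by O(eps).  The vector b x_low is feasible, and r_star is of this form: beta_star sqrt(w_l) >= 1
   makes the min pick b_l, and each c_l lies between (1 - B) x_low and 1.  Hence Delta_opt and
   Delta_bar(r_star) are both squeezed into [L, L + O(eps)]. *)
From Pilot Require Import Defs.
From Stdlib Require Import Reals Lra Lia Psatz ClassicalEpsilon.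
Open Scope R_scope.

Lemma fsum_ext n f g : (forall i, (i < n)%nat -> f i = g i) -> fsum n f = fsum n g.
Proof.
  induction n as [|n IH]; intros H; simpl; [reflexivity|].
  rewrite IH by (intros; apply H; lia). rewrite H by lia. reflexivity.
Qed.

Lemma fsum_le n f g : (forall i, (i < n)%nat -> f i <= g i) -> fsum n f <= fsum n g.
Proof.
  induction n as [|n IH]; intros H; simpl; [lra|].
  assert (fsum n f <= fsum n g) by (apply IH; intros; apply H; lia).
  assert (f n <= g n) by (apply H; lia).
  lra.
Qed.

Lemma fsum_plus n f g : fsum n (fun i => f i + g i) = fsum n f + fsum n g.
Proof. induction n as [|n IH]; simpl; [lra|]. rewrite IH; lra. Qed.

Lemma fsum_scal n c f : fsum n (fun i => c * f i) = c * fsum n f.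
Proof. induction n as [|n IH]; simpl; [lra|]. rewrite IH; lra. Qed.

Lemma fsum_nonneg n f : (forall i, (i < n)%nat -> 0 <= f i) -> 0 <= fsum n f.
Proof.
  induction n as [|n IH]; intros H; simpl; [lra|].
  assert (0 <= fsum n f) by (apply IH; intros; apply H; lia).
  assert (0 <= f n) by (apply H; lia).
  lra.
Qed.

Lemma term_le_fsum n f l :
  (forall i, (i < n)%nat -> 0 <= f i) -> (l < n)%nat -> f l <= fsum n f.
Proof.
  induction n as [|n IH]; intros H Hl; [lia|]. simpl.
  destruct (Nat.eq_dec l n) as [->|Hne].
  - assert (0 <= fsum n f) by (apply fsum_nonneg; intros; apply H; lia). lra.
  - assert (f l <= fsum n f) by (apply IH; [intros; apply H|]; lia).
    assert (0 <= f n) by (apply H; lia).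
    lra.
Qed.

Lemma fmin_bounds n f lo hi :
  (1 <= n)%nat -> (forall i, (i < n)%nat -> lo <= f i <= hi) -> lo <= fmin n f <= hi.
Proof.
  destruct n as [|k]; [lia|]. intros _.
  induction k as [|k IH]; intros H; [apply H; lia|].
  change (fmin (S (S k)) f) with (Rmin (fmin (S k) f) (f (S k))).
  assert (lo <= fmin (S k) f <= hi) by (apply IH; intros; apply H; lia).
  assert (lo <= f (S k) <= hi) by (apply H; lia).
  unfold Rmin; destruct (Rle_dec _ _); lra.
Qed.

Lemma Delta_bar_ext M w eps r r' :
  (forall i, (i < M)%nat -> r i = r' i) -> Delta_bar M w eps r = Delta_bar M w eps r'.
Proof.
  intros H. unfold Delta_bar.
  assert (HS : S_r M r = S_r M r') by (apply fsum_ext; exact H).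
  rewrite HS. f_equal. apply fsum_ext. intros i Hi. rewrite H by exact Hi. reflexivity.
Qed.

Lemma Rinf_is_glb (E : R -> Prop) m :
  (exists v, E v) -> (forall v, E v -> m <= v) -> is_glb E (Rinf E).
Proof.
  intros [v0 Hv0] Hlb. unfold Rinf. apply epsilon_spec.
  destruct (completeness (fun x => E (-x))) as [s [Hub Hleast]].
  - exists (-m). intros x Hx. specialize (Hlb _ Hx). lra.
  - exists (-v0). rewrite Ropp_involutive. exact Hv0.
  - exists (-s). split.
    + intros x Hx. assert (-x <= s) by (apply Hub; rewrite Ropp_involutive; exact Hx). lra.
    + intros m' Hm'. assert (s <= -m') by (apply Hleast; intros x Hx; specialize (Hm' _ Hx); lra).
      lra.
Qed.

Lemma exp_le_mono u v : u <= v -> exp u <= exp v.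
Proof. intros [H|H]; [left; apply exp_increasing; exact H|right; rewrite H; reflexivity]. Qed.

Lemma exp_ge_1 u : 0 <= u -> 1 <= exp u.
Proof. intros. pose proof (exp_ineq1_le u). lra. Qed.

Lemma exp_le_1 u : u <= 0 -> exp u <= 1.
Proof. intros Hu. rewrite <- exp_0. apply exp_le_mono. exact Hu. Qed.

(* From exp(u) (1 - u) <= exp(u) exp(-u) = 1. *)
Lemma exp_mul_1p_le u : 0 <= u <= 1/2 -> exp u * (1 + u) <= 1 + 4 * u.
Proof.
  intros Hu. pose proof (exp_ineq1_le (-u)). pose proof (exp_pos u).
  assert (exp u * exp (-u) = 1) by (rewrite <- exp_plus, Rplus_opp_r; apply exp_0).
  assert (exp u <= 1 + 2 * u) by nra.
  nra.
Qed.

Lemma cv_right_of_linear_bound (f : R -> R) l C d0 :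
  0 < d0 -> 0 <= C -> (forall eps, 0 < eps < d0 -> l <= f eps <= l + C * eps) ->
  forall eta, 0 < eta -> exists delta, 0 < delta /\
    forall eps, 0 < eps < delta -> Rabs (f eps - l) < eta.
Proof.
  intros Hd0 HC Hf eta Heta.
  exists (Rmin d0 (eta / (C + 1))). split.
  - apply Rmin_pos; [exact Hd0|]. apply Rdiv_lt_0_compat; lra.
  - intros eps [Heps Hlt].
    assert (Hd : eps < d0) by (eapply Rlt_le_trans; [exact Hlt|apply Rmin_l]).
    assert (Heta' : eps * (C + 1) < eta).
    { assert (Hlt' : eps < eta / (C + 1)) by (eapply Rlt_le_trans; [exact Hlt|apply Rmin_r]).
      apply Rmult_lt_compat_r with (r := C + 1) in Hlt'; [|lra].
      replace (eta / (C + 1) * (C + 1)) with eta in Hlt' by (field; lra). exact Hlt'. }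
    destruct (Hf eps (conj Heps Hd)).
    rewrite Rabs_right by lra. nra.
Qed.

Section EnergyScarce.

Variables (M : nat) (w b : nat -> R).
Hypothesis HM : (1 <= M)%nat.
Hypothesis Hw : forall i, (i < M)%nat -> 0 < w i.
Hypothesis Hb : forall i, (i < M)%nat -> 0 < b i.
Hypothesis HB : Bsum M b < 1.

Local Notation B := (Bsum M b).
Local Notation K := (Bsum M b / (1 - Bsum M b)).
Local Notation W := (fsum M (fun i => w i / b i)).
Local Notation L := (fsum M (fun i => w i / b i + w i)).

Definition x_low (eps : R) : R := (1 - B) / ((1 - B) ^ 2 + eps * B).

Definition gap (eps : R) : R := W * (exp (eps * K) * (1 + eps * K) - 1).

Lemma b_le_Bsum l : (l < M)%nat -> b l <= B.
Proof. apply term_le_fsum. intros; left; auto. Qed.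

Lemma Bsum_pos : 0 < B.
Proof. apply Rlt_le_trans with (b 0%nat); [apply Hb|apply b_le_Bsum]; lia. Qed.

Lemma K_nonneg : 0 <= K.
Proof. pose proof Bsum_pos. left; apply Rdiv_lt_0_compat; lra. Qed.

Lemma W_nonneg : 0 <= W.
Proof. apply fsum_nonneg. intros; left; apply Rdiv_lt_0_compat; auto. Qed.

Lemma x_low_pos eps : 0 <= eps -> 0 < x_low eps.
Proof. pose proof Bsum_pos. intros. apply Rdiv_lt_0_compat; nra. Qed.

Lemma x_low_eq eps : 0 <= eps -> x_low eps * ((1 - B) ^ 2 + eps * B) = 1 - B.
Proof. pose proof Bsum_pos. intros. unfold x_low. field. nra. Qed.

Lemma x_low_le eps : 0 <= eps -> x_low eps <= 1 / (1 - B).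
Proof.
  intros He. pose proof Bsum_pos. pose proof (x_low_eq eps He). pose proof (x_low_pos eps He).
  apply Rmult_le_reg_r with ((1 - B) ^ 2); [apply pow_lt; lra|].
  replace (1 / (1 - B) * (1 - B) ^ 2) with (1 - B) by (field; lra).
  assert (0 <= x_low eps * (eps * B)) by (apply Rmult_le_pos; nra).
  nra.
Qed.

Lemma S_r_scale x : S_r M (fun l => b l * x) = B * x.
Proof.
  unfold S_r, Bsum. rewrite Rmult_comm, <- fsum_scal.
  apply fsum_ext. intros; ring.
Qed.

Lemma le_S_r r l : (forall i, (i < M)%nat -> 0 < r i) -> (l < M)%nat -> r l <= S_r M r.
Proof. intros Hpos. apply term_le_fsum. intros; left; auto. Qed.

Lemma feasible_le_scaled_sum eps r l :
  0 <= eps -> feasible M b eps r -> (l < M)%nat -> r l <= b l * (S_r M r + 1).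
Proof.
  intros He [Hpos Hsig] Hl. specialize (Hsig l Hl). pose proof (Hpos l Hl).
  pose proof (le_S_r r l Hpos Hl).
  unfold Defs.sigma in Hsig. set (S := S_r M r) in *. set (E := exp (- r l * eps)) in *.
  assert (E <= 1) by (apply exp_le_1; nra).
  assert (r l <= (1 - E) * S + r l * E) by nra.
  apply Rle_trans with ((1 - E) * S + r l * E); [assumption|].
  apply Rmult_le_reg_r with (/ (S + 1)); [apply Rinv_0_lt_compat; lra|].
  replace (b l * (S + 1) * / (S + 1)) with (b l) by (field; lra).
  exact Hsig.
Qed.

Lemma Delta_bar_ge eps r : 0 <= eps -> feasible M b eps r -> L <= Delta_bar M w eps r.
Proof.
  intros He Hf. unfold Delta_bar. rewrite fsum_plus. apply Rplus_le_compat_r.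
  apply fsum_le. intros l Hl.
  pose proof (Hw l Hl). pose proof (Hb l Hl). pose proof (proj1 Hf l Hl).
  pose proof (feasible_le_scaled_sum eps r l He Hf Hl) as Hr.
  pose proof (le_S_r r l (proj1 Hf) Hl).
  set (S := S_r M r) in *.
  assert (Hexp : 1 <= exp (- r l * eps) * exp (eps * S)) by (rewrite <- exp_plus; apply exp_ge_1; nra).
  assert (Hratio : 1 / b l <= (1 + S) / r l).
  { apply Rmult_le_reg_r with (b l * r l); [nra|].
    replace (1 / b l * (b l * r l)) with (r l) by (field; lra).
    replace ((1 + S) / r l * (b l * r l)) with (b l * (S + 1)) by (field; lra).
    exact Hr. }
  replace (w l * exp (- r l * eps) / r l * exp (eps * S) * (1 + S))
    with (w l * (exp (- r l * eps) * exp (eps * S)) * ((1 + S) / r l)) by (field; lra).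
  replace (w l / b l) with (w l * 1 * (1 / b l)) by (field; lra).
  assert (0 < 1 / b l) by (apply Rdiv_lt_0_compat; lra).
  apply Rmult_le_compat; nra.
Qed.

Lemma scaled_term_bounds eps x i :
  0 < eps -> x_low eps <= x <= 1 / (1 - B) -> (i < M)%nat ->
  w i / b i <= w i * exp (- (b i * x) * eps) / (b i * x) * exp (eps * (B * x)) * (1 + B * x)
            <= w i / b i * (exp (eps * K) * (1 + eps * K)).
Proof.
  intros He [Hlo Hhi] Hi. pose proof Bsum_pos. pose proof (Hw i Hi). pose proof (Hb i Hi).
  pose proof (b_le_Bsum i Hi). pose proof (x_low_pos eps (Rlt_le _ _ He)).
  assert (Hx : 0 < x) by lra.
  replace (w i * exp (- (b i * x) * eps) / (b i * x) * exp (eps * (B * x)) * (1 + B * x))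
    with (w i / b i * (exp (eps * x * (B - b i)) * (1 / x + B)))
    by (replace (eps * x * (B - b i)) with (- (b i * x) * eps + eps * (B * x)) by ring;
        rewrite exp_plus; field; lra).
  assert (HBx : B * x <= K).
  { replace K with (B * (1 / (1 - B))) by (field; lra). apply Rmult_le_compat_l; lra. }
  assert (HxB : 0 <= x * (B - b i) <= K) by nra.
  assert (He1 : 1 <= exp (eps * x * (B - b i)))
    by (apply exp_ge_1; rewrite Rmult_assoc; apply Rmult_le_pos; lra).
  assert (He2 : exp (eps * x * (B - b i)) <= exp (eps * K))
    by (apply exp_le_mono; rewrite Rmult_assoc; apply Rmult_le_compat_l; lra).
  assert (Hq1 : 1 <= 1 / x + B).
  { assert (x * (1 - B) <= 1).
    { apply Rmult_le_compat_r with (r := 1 - B) in Hhi; [|lra].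
      replace (1 / (1 - B) * (1 - B)) with 1 in Hhi by (field; lra). exact Hhi. }
    apply Rmult_le_reg_r with x; [exact Hx|].
    replace ((1 / x + B) * x) with (1 + B * x) by (field; lra). nra. }
  assert (Hq2 : 1 / x + B <= 1 + eps * K).
  { assert (1 / x <= 1 / x_low eps).
    { unfold Rdiv. rewrite !Rmult_1_l. apply Rinv_le_contravar; lra. }
    assert (1 / x_low eps = (1 - B) + eps * K)
      by (unfold x_low; field; repeat split; nra).
    lra. }
  assert (0 < w i / b i) by (apply Rdiv_lt_0_compat; auto).
  split.
  - rewrite <- (Rmult_1_r (w i / b i)) at 1. apply Rmult_le_compat_l; nra.
  - apply Rmult_le_compat_l; [lra|]. apply Rmult_le_compat; lra.
Qed.

Lemma Delta_bar_scaled_bounds eps x :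
  0 < eps -> x_low eps <= x <= 1 / (1 - B) ->
  L <= Delta_bar M w eps (fun l => b l * x) <= L + gap eps.
Proof.
  intros He Hx. unfold Delta_bar, gap. rewrite S_r_scale, fsum_plus.
  set (T := fun l => w l * exp (- (b l * x) * eps) / (b l * x) * exp (eps * (B * x)) * (1 + B * x)).
  assert (Hlo : fsum M (fun i => w i / b i) <= fsum M T)
    by (apply fsum_le; intros i Hi; apply (scaled_term_bounds eps x i He Hx Hi)).
  assert (Hhi : fsum M T <= fsum M (fun i => exp (eps * K) * (1 + eps * K) * (w i / b i))).
  { apply fsum_le. intros i Hi. rewrite Rmult_comm. apply (scaled_term_bounds eps x i He Hx Hi). }
  rewrite fsum_scal in Hhi.
  lra.
Qed.

Lemma sigma_scaled_le eps x l :
  0 < eps -> 0 < x -> eps * B * x ^ 2 + (1 - B) * x <= 1 -> (l < M)%nat ->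
  Defs.sigma M eps (fun i => b i * x) l <= b l.
Proof.
  intros He Hx Hq Hl. pose proof Bsum_pos. pose proof (Hb l Hl).
  assert (Hp : 0 < b l * x * eps) by (apply Rmult_lt_0_compat; [apply Rmult_lt_0_compat|]; lra).
  unfold Defs.sigma. rewrite S_r_scale.
  set (E := exp (- (b l * x) * eps)).
  assert (HE1 : 1 - E <= b l * x * eps) by (pose proof (exp_ineq1_le (- (b l * x) * eps)); unfold E; lra).
  assert (HE2 : E <= 1) by (apply exp_le_1; lra).
  assert (0 < E) by apply exp_pos.
  apply Rmult_le_reg_r with (B * x + 1); [nra|].
  replace (((1 - E) * (B * x) + b l * x * E) / (B * x + 1) * (B * x + 1))
    with ((1 - E) * (B * x) + b l * x * E) by (field; nra).
  assert ((1 - E) * (B * x) <= b l * x * eps * (B * x)) by (apply Rmult_le_compat_r; nra).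
  assert (b l * x * E <= b l * x) by nra.
  assert (b l * (eps * B * x ^ 2 + (1 - B) * x) <= b l) by nra.
  nra.
Qed.

Lemma x_low_quadratic_le eps : 0 <= eps -> eps * B * x_low eps ^ 2 + (1 - B) * x_low eps <= 1.
Proof.
  intros He. pose proof (x_low_eq eps He) as Heq.
  set (y := x_low eps * (1 - B)).
  assert (eps * B * x_low eps ^ 2 = y * (1 - y)).
  { unfold y. apply (f_equal (Rmult (x_low eps))) in Heq. nra. }
  replace ((1 - B) * x_low eps) with y by (unfold y; ring).
  pose proof (pow2_ge_0 (y - 1)). nra.
Qed.

Lemma feasible_x_low eps : 0 < eps -> feasible M b eps (fun l => b l * x_low eps).
Proof.
  intros He. pose proof (x_low_pos eps (Rlt_le _ _ He)). split.
  - intros i Hi. pose proof (Hb i Hi). nra.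
  - intros l Hl. apply sigma_scaled_le; auto. apply x_low_quadratic_le. lra.
Qed.

Lemma Delta_opt_bounds eps : 0 < eps -> L <= Delta_opt M w b eps <= L + gap eps.
Proof.
  intros He.
  set (E := fun v => exists r, feasible M b eps r /\ v = Delta_bar M w eps r).
  assert (Hlb : forall v, E v -> L <= v).
  { intros v [r [Hr ->]]. apply Delta_bar_ge; [lra|exact Hr]. }
  set (v0 := Delta_bar M w eps (fun l => b l * x_low eps)).
  assert (Hv0 : E v0) by (exists (fun l => b l * x_low eps); split; [apply feasible_x_low|]; auto).
  destruct (Rinf_is_glb E L (ex_intro _ _ Hv0) Hlb) as [Hlow Hgreat].
  assert (Hv0_le : v0 <= L + gap eps).
  { apply Delta_bar_scaled_bounds; [exact He|].
    split; [apply Rle_refl|apply x_low_le; lra]. }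
  pose proof (Hlow _ Hv0). pose proof (Hgreat L Hlb).
  unfold Delta_opt. fold E. lra.
Qed.

Lemma c_coef_bounds eps l :
  0 <= eps -> (l < M)%nat -> (1 - B) * x_low eps <= c_coef M b eps l <= 1.
Proof.
  intros He Hl. pose proof Bsum_pos. pose proof (Hb l Hl) as Hbl. pose proof (b_le_Bsum l Hl).
  unfold c_coef, x_low. set (bl := b l) in *.
  set (a := bl * (1 - B) ^ 2).
  assert (Ha : 0 < a) by (unfold a; apply Rmult_lt_0_compat; [lra|apply pow_lt; lra]).
  set (z := 2 * bl * (B - bl) * eps).
  assert (Hz : 0 <= z) by (unfold z; apply Rmult_le_pos; [apply Rmult_le_pos|]; lra).
  (* The radicand is a^2 + 2 a z, so the denominator lies in [2a, 2a + z]. *)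
  replace (bl ^ 2 * (1 - B) ^ 4 + 4 * bl ^ 2 * (1 - B) ^ 2 * (B - bl) * eps)
    with (a * a + 2 * a * z) by (unfold a, z; ring).
  assert (Hs1 : a <= sqrt (a * a + 2 * a * z)).
  { rewrite <- (sqrt_square a) at 1 by lra. apply sqrt_le_1_alt. nra. }
  assert (Hs2 : sqrt (a * a + 2 * a * z) <= a + z).
  { rewrite <- (sqrt_square (a + z)) by lra. apply sqrt_le_1_alt. nra. }
  replace (2 * bl * (1 - B) ^ 2) with (2 * a) by (unfold a; ring).
  set (s := sqrt (a * a + 2 * a * z)) in *.
  split.
  - assert (0 <= bl * B * eps) by (apply Rmult_le_pos; nra).
    assert (0 < (1 - B) ^ 2) by (apply pow_lt; lra).
    replace ((1 - B) * ((1 - B) / ((1 - B) ^ 2 + eps * B)))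
      with (2 * a / (2 * a + 2 * bl * B * eps))
      by (unfold a; field; split; apply Rgt_not_eq; nra).
    assert (z <= 2 * bl * B * eps) by (unfold z; nra).
    unfold Rdiv. apply Rmult_le_compat_l; [lra|]. apply Rinv_le_contravar; lra.
  - apply Rmult_le_reg_r with (a + s); [lra|].
    replace (2 * a / (a + s) * (a + s)) with (2 * a) by (field; lra). lra.
Qed.

Lemma x_star_bounds eps : 0 <= eps -> x_low eps <= x_star M b eps <= 1 / (1 - B).
Proof.
  intros He. pose proof Bsum_pos. pose proof (x_low_pos eps He).
  assert (Hf : (1 - B) * x_low eps <= fmin M (c_coef M b eps) <= 1)
    by (apply fmin_bounds; [exact HM|]; intros; apply c_coef_bounds; auto).
  unfold x_star. split.
  - apply Rmult_le_reg_r with (1 - B); [lra|].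
    replace (fmin M (c_coef M b eps) / (1 - B) * (1 - B))
      with (fmin M (c_coef M b eps)) by (field; lra).
    lra.
  - unfold Rdiv. apply Rmult_le_compat_r; [left; apply Rinv_0_lt_compat|]; lra.
Qed.

Lemma r_star_scaled eps l : (l < M)%nat -> r_star M w b eps l = b l * x_star M b eps.
Proof.
  intros Hl. unfold r_star. f_equal. apply Rmin_left.
  pose proof (b_le_Bsum l Hl). pose proof Bsum_pos.
  assert (Hs : 0 < sqrt (w l)) by (apply sqrt_lt_R0; auto).
  assert (1 / sqrt (w l) <= beta_star M w).
  { apply (term_le_fsum M (fun i => 1 / sqrt (w i))); auto.
    intros i Hi. left. apply Rdiv_lt_0_compat; [lra|apply sqrt_lt_R0; auto]. }
  assert (1 <= beta_star M w * sqrt (w l)).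
  { replace 1 with (1 / sqrt (w l) * sqrt (w l)) at 1 by (field; lra).
    apply Rmult_le_compat_r; lra. }
  lra.
Qed.

Lemma Delta_bar_r_star_bounds eps :
  0 < eps -> L <= Delta_bar M w eps (r_star M w b eps) <= L + gap eps.
Proof.
  intros He.
  rewrite (Delta_bar_ext M w eps _ (fun l => b l * x_star M b eps)) by exact (r_star_scaled eps).
  apply Delta_bar_scaled_bounds; [exact He|]. apply x_star_bounds. lra.
Qed.

Lemma gap_le eps : 0 <= eps -> eps * K <= 1/2 -> gap eps <= 4 * W * K * eps.
Proof.
  intros He HK. pose proof K_nonneg. pose proof W_nonneg. unfold gap.
  assert (exp (eps * K) * (1 + eps * K) - 1 <= 4 * (eps * K))
    by (pose proof (exp_mul_1p_le (eps * K)); nra).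
  nra.
Qed.

End EnergyScarce.

Theorem corollary2 (M : nat) (w b : nat -> R)
  (HM : (1 <= M)%nat)
  (Hw : forall i, (i < M)%nat -> 0 < w i)
  (Hb : forall i, (i < M)%nat -> 0 < b i)
  (HB : Bsum M b < 1) :
  (forall eta, 0 < eta -> exists delta, 0 < delta /\
     forall eps, 0 < eps < delta ->
       Rabs (Rabs (Delta_bar M w eps (r_star M w b eps) - Delta_opt M w b eps) - 0) < eta)
  /\
  (forall eta, 0 < eta -> exists delta, 0 < delta /\
     forall eps, 0 < eps < delta ->
       Rabs (Delta_opt M w b eps - fsum M (fun i => w i / b i + w i)) < eta).
Proof.
  set (K := Bsum M b / (1 - Bsum M b)).
  set (C := 4 * fsum M (fun i => w i / b i) * K).
  assert (HK : 0 <= K) by (apply K_nonneg; auto).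
  assert (HC : 0 <= C) by (pose proof (W_nonneg M w b Hw Hb); unfold C; nra).
  assert (Hd0 : 0 < 1 / (2 * (K + 1))) by (apply Rdiv_lt_0_compat; lra).
  assert (Hgap : forall eps, 0 < eps < 1 / (2 * (K + 1)) -> gap M w b eps <= C * eps).
  { intros eps [He Hlt]. apply gap_le; auto; [lra|].
    apply Rmult_lt_compat_r with (r := 2 * (K + 1)) in Hlt; [|lra].
    replace (1 / (2 * (K + 1)) * (2 * (K + 1))) with 1 in Hlt by (field; lra). fold K. nra. }
  split.
  - intros eta Heta.
    apply (cv_right_of_linear_bound
             (fun eps => Rabs (Delta_bar M w eps (r_star M w b eps) - Delta_opt M w b eps))
             0 C _ Hd0 HC); [|exact Heta].
    intros eps Heps.
    pose proof (Delta_opt_bounds M w b HM Hw Hb HB eps (proj1 Heps)).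
    pose proof (Delta_bar_r_star_bounds M w b HM Hw Hb HB eps (proj1 Heps)).
    pose proof (Hgap eps Heps).
    split; [apply Rabs_pos|]. apply Rabs_le. lra.
  - apply (cv_right_of_linear_bound _ _ C _ Hd0 HC). intros eps Heps.
    pose proof (Delta_opt_bounds M w b HM Hw Hb HB eps (proj1 Heps)).
    pose proof (Hgap eps Heps). lra.
Qed.
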